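(* Let $\alpha_1,\dots,\alpha_n$ be real numbers and $\pi\in S_n$ a permutation with $\alpha_{\pi(1)}>\alpha_{\pi(2)}>\dots>\alpha_{\pi(n)}$. Let $w=s_{\ell_1}\cdots s_{\ell_k}$ be a reduced word for a glide in $\hat S_n$, and in the wiring diagram of $|w$ number the wires so that wire $i$ starts in position $i$; give each crossing the parameter $\alpha_{\mathrm{up}}-\alpha_{\mathrm{low}}$, where $\mathrm{up},\mathrm{low}$ are the numbers of its upper and lower wires. Then all crossing parameters are positive if and only if $t(w)\in\pi(\mathfrak C_{id})$, i.e. if and only if a (equivalently any) representative $(t_1,\dots,t_n)\in\mathbb Z^n$ of $t(w)$ satisfies $t_{\pi(1)}\ge t_{\pi(2)}\ge\dots\ge t_{\pi(n)}$.
   Context: $\hat S_n$: generators $s_0,\dots,s_{n-1}$ (indices mod $n$), relations $s_i^2=1$, $s_is_js_i=s_js_is_j$ if $i-j\equiv\pm1$, $s_is_j=s_js_i$ if $i-j\not\equiv0,\pm1\pmod n$. $\phi:\hat S_n\to S_n$, $s_i\mapsto(i\ i+1)$ for $1\le i\le n-1$, $s_0\mapsto(1\ n)$; a glide of offset $k\in\{0,\dots,n-1\}$ is $g$ with $\phi(g)(j)\equiv j+k\pmod n$. Wiring diagram: the word is drawn left to right on a cylinder with wires in positions $1,\dots,n$ (mod $n$); $s_i$ is a crossing of positions $i,i+1$ ($s_0$: positions $n$ and $1$); the upper wire of $s_i$ passes from position $i+1$ to $i$ (for $s_0$: from position $1$ to $n$). Universal cover: positions are integers, $s_i$ lifting to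 crossings of $p,p+1$ for all $p\equiv i\pmod n$, lifted wires labelled by their starting integer positions. A chamber's label is $(\mathbf s_1,\dots,\mathbf s_n)$, $\mathbf s_i=\lceil\max\{b\in S: b\equiv i\bmod n\}/n\rceil$ where $S$ is the set of labels of wires passing below it. The trajectory $t(w)\in\mathbb Z^n/\mathbb Z(1,\dots,1)$ is the label of the chamber directly above the wire labelled $1$ at the right end of the diagram minus the label of the chamber directly above wire $1$ at the left end. The dominant chamber is $\mathfrak C_{id}=\{x: x_1\ge x_2\ge\dots\ge x_n\}$. *)

From Stdlib Require Import ZArith Reals List Lia.
Open Scope Z_scope.

(* Universal cover of the cylinder: positions are integers.  The letter s_i
   (0 <= i < n) acts as the simultaneous swap of positions p, p+1 for all
   p = i (mod n). *)
Definition tau (n i p : Z) : Z :=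
  if Z.eqb (p mod n) (i mod n) then p + 1
  else if Z.eqb ((p - 1) mod n) (i mod n) then p - 1 else p.

Definition valid_word (n : Z) (w : list Z) : Prop :=
  Forall (fun l => 0 <= l < n) w.

(* State of the (lifted) wiring diagram after reading w left to right:
   position p |-> label (starting integer position) of the wire at p.
   This is tau_{l_1} o ... o tau_{l_k}, i.e. the affine permutation
   representing the group element s_{l_1}...s_{l_k} of \hat S_n. *)
Definition wstate (n : Z) (w : list Z) : Z -> Z :=
  fold_left (fun (sigma : Z -> Z) l => fun p => sigma (tau n l p)) w (fun p => p).

(* Two words represent the same element of \hat S_n iff they give the same
   affine permutation (faithful realization, n >= 3). *)
Definition reduced_word (n : Z) (w : list Z) : Prop :=
  forall v : list Z, valid_word n v ->
    (forall p, wstate n v p = wstate n w p) -> (length w <= length v)%nat.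

Definition is_glide (n : Z) (w : list Z) : Prop :=
  exists k, 0 <= k < n /\
    forall j, 1 <= j <= n -> (wstate n w j) mod n = (j + k) mod n.

(* Crossings of the diagram, one per letter, as pairs (upper label, lower label):
   the crossing s_l lifted to positions l, l+1; the upper wire is the one
   coming from position l+1. *)
Fixpoint crossings_aux (n : Z) (sigma : Z -> Z) (w : list Z) : list (Z * Z) :=
  match w with
  | nil => nil
  | l :: w' => (sigma (l + 1), sigma l)
                 :: crossings_aux n (fun p => sigma (tau n l p)) w'
  end.

Definition crossings (n : Z) (w : list Z) : list (Z * Z) :=
  crossings_aux n (fun p => p) w.

Definition wire_num (n b : Z) : Z := (b - 1) mod n + 1.

Definition all_params_positive (n : Z) (alpha : Z -> R) (w : list Z) : Prop :=
  Forall (fun c => (alpha (wire_num n (fst c)) - alpha (wire_num n (snd c)) > 0)%R)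
         (crossings n w).

(* Position at the right end of the lifted wire labelled 1. *)
Definition wire1_pos (n : Z) (w : list Z) : Z :=
  fold_left (fun q l => tau n l q) w 1.

Definition zceil (b n : Z) : Z := - ((- b) / n).

(* s is the label of the chamber directly above position q in state sigma:
   S = { sigma p | p <= q } (labels of the wires below the chamber),
   s_i = ceil (max {b in S | b = i mod n} / n). *)
Definition is_chamber_label (n : Z) (sigma : Z -> Z) (q : Z) (s : Z -> Z) : Prop :=
  forall i, 1 <= i <= n ->
    exists b, (exists p, p <= q /\ sigma p = b) /\ b mod n = i mod n /\
      (forall p, p <= q -> (sigma p) mod n = i mod n -> sigma p <= b) /\
      s i = zceil b n.

Definition is_trajectory (n : Z) (w : list Z) (t : Z -> Z) : Prop :=
  exists sR sL : Z -> Z,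
    is_chamber_label n (wstate n w) (wire1_pos n w) sR /\
    is_chamber_label n (fun p => p) 1 sL /\
    forall i, 1 <= i <= n -> t i = sR i - sL i.

(* Follow each lifted wire [x] to its final position and call the difference its
   displacement [disp w x].  For a glide all displacements agree modulo [n], and the
   trajectory is [t_i = (disp 1 - disp i) / n], so [t(w)] lies in [pi(C_id)] iff
   [disp (pi 1) <= ... <= disp (pi n)].  In a reduced word two wires cross at most once
   (a second crossing could be cancelled against the first, shortening the word), so the
   lower wire of every crossing starts below and ends above the upper one and has the
   larger displacement; conversely a displacement gap of [n] between two classes forces
   wires of these classes to cross.  Hence all parameters [alpha_up - alpha_low] are
   positive iff larger displacement always goes with smaller [alpha], which is the
   sortedness of the displacements along [pi]. *)

From Stdlib Require Import ZArith Reals List Lia Lra.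
Import ListNotations.
Open Scope Z_scope.

Lemma mod_eq_ex n a b : 0 < n -> a mod n = b mod n -> exists c, a = b + c * n.
Proof.
  intros Hn H. exists (a / n - b / n).
  pose proof (Z.div_mod a n ltac:(lia)). pose proof (Z.div_mod b n ltac:(lia)).
  nia.
Qed.

Section Cylinder.

Variable n : Z.
Hypothesis n_ge2 : 2 <= n.

Lemma mod_succ_neq p : p mod n <> (p + 1) mod n.
Proof.
  intros H. apply (mod_eq_ex n) in H as [c Hc]; [|lia].
  assert (c * n = -1) by lia. destruct (Z.le_gt_cases c (-1)); [|assert (c = 0) by nia]; nia.
Qed.

Lemma mod_pred_eq p q : p mod n = (q + 1) mod n -> (p - 1) mod n = q mod n.
Proof.
  intros H. apply (mod_eq_ex n) in H as [c ->]; [|lia].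
  replace (q + 1 + c * n - 1) with (q + c * n) by ring. apply Z.mod_add; lia.
Qed.

Lemma mod_shift z a b : z mod n = a mod n -> (z + b - a) mod n = b mod n.
Proof.
  intros H. apply (mod_eq_ex n) in H as [c ->]; [|lia].
  replace (a + c * n + b - a) with (b + c * n) by ring. apply Z.mod_add; lia.
Qed.

(** * Letters acting on the universal cover *)

Lemma tau_cases l p :
  (p mod n = l mod n /\ tau n l p = p + 1) \/
  (p mod n <> l mod n /\ (p - 1) mod n = l mod n /\ tau n l p = p - 1) \/
  (p mod n <> l mod n /\ (p - 1) mod n <> l mod n /\ tau n l p = p).
Proof.
  unfold tau. destruct (Z.eqb_spec (p mod n) (l mod n)); auto.
  destruct (Z.eqb_spec ((p - 1) mod n) (l mod n)); auto.
Qed.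

Lemma tau_periodic l p c : tau n l (p + c * n) = tau n l p + c * n.
Proof.
  unfold tau. rewrite Z.mod_add by lia.
  replace (p + c * n - 1) with ((p - 1) + c * n) by ring. rewrite Z.mod_add by lia.
  destruct (Z.eqb _ _); [lia|]. destruct (Z.eqb _ _); lia.
Qed.

Lemma tau_involutive l p : tau n l (tau n l p) = p.
Proof.
  destruct (tau_cases l p) as [[H1 E]|[[H1 [H2 E]]|[H1 [H2 E]]]]; rewrite E.
  - destruct (tau_cases l (p + 1)) as [[G1 _]|[[_ [_ G]]|[_ [G2 _]]]].
    + exfalso. apply (mod_succ_neq p). congruence.
    + lia.
    + replace (p + 1 - 1) with p in G2 by ring. contradiction.
  - destruct (tau_cases l (p - 1)) as [[_ G]|[[_ [G2 _]]|[G1 _]]].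
    + lia.
    + exfalso. apply (mod_succ_neq (p - 1 - 1)).
      replace (p - 1 - 1 + 1) with (p - 1) by ring. congruence.
    + contradiction.
  - exact E.
Qed.

Lemma tau_near l p : p - 1 <= tau n l p <= p + 1.
Proof. destruct (tau_cases l p) as [[_ ?]|[[_ [_ ?]]|[_ [_ ?]]]]; lia. Qed.

Lemma tau_inversion l a b : a < b -> tau n l a > tau n l b ->
  a mod n = l mod n /\ b = a + 1.
Proof.
  intros Hab H. pose proof (tau_near l a). pose proof (tau_near l b).
  assert (Eb : b = a + 1) by lia. split; [|exact Eb].
  destruct (tau_cases l a) as [[? _]|[[_ [_ ?]]|[_ [_ ?]]]]; [assumption|lia|lia].
Qed.

Lemma tau_swap_adjacent l a : a mod n = l mod n -> tau n l a = a + 1 /\ tau n l (a + 1) = a.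
Proof.
  intros H. unfold tau. rewrite H, Z.eqb_refl. split; [reflexivity|].
  destruct (Z.eqb_spec ((a + 1) mod n) (l mod n)) as [E|_].
  - exfalso. apply (mod_succ_neq a). congruence.
  - replace (a + 1 - 1) with a by ring. rewrite H, Z.eqb_refl. ring.
Qed.

(** * Wires of the lifted wiring diagram *)

(* [wstate] maps positions to wire labels; [wire_pos] is its inverse. *)
Definition wire_pos (w : list Z) (x : Z) : Z := fold_left (fun q l => tau n l q) w x.

Lemma wstate_snoc w l p : wstate n (w ++ [l]) p = wstate n w (tau n l p).
Proof. unfold wstate. rewrite fold_left_app. reflexivity. Qed.

Lemma wire_pos_snoc w l x : wire_pos (w ++ [l]) x = tau n l (wire_pos w x).
Proof. unfold wire_pos. rewrite fold_left_app. reflexivity. Qed.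

Lemma wstate_app u v p : wstate n (u ++ v) p = wstate n u (wstate n v p).
Proof.
  revert p. induction v as [|l v IH] using rev_ind; intros p.
  - rewrite app_nil_r. reflexivity.
  - rewrite app_assoc, !wstate_snoc, IH. reflexivity.
Qed.

Lemma wstate_cons l u p : wstate n (l :: u) p = tau n l (wstate n u p).
Proof. exact (wstate_app [l] u p). Qed.

Lemma wstate_periodic w p c : wstate n w (p + c * n) = wstate n w p + c * n.
Proof.
  revert p. induction w as [|l w IH] using rev_ind; intros p; [reflexivity|].
  rewrite !wstate_snoc, tau_periodic. apply IH.
Qed.

Lemma wire_pos_periodic w x c : wire_pos w (x + c * n) = wire_pos w x + c * n.
Proof.
  revert x. induction w as [|l w IH] using rev_ind; intros x; [reflexivity|].
  rewrite !wire_pos_snoc, IH. apply tau_periodic.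
Qed.

Lemma wstate_wire_pos w x : wstate n w (wire_pos w x) = x.
Proof.
  induction w as [|l w IH] using rev_ind; [reflexivity|].
  rewrite wstate_snoc, wire_pos_snoc, tau_involutive. exact IH.
Qed.

Lemma wire_pos_wstate w p : wire_pos w (wstate n w p) = p.
Proof.
  revert p. induction w as [|l w IH] using rev_ind; intros p; [reflexivity|].
  rewrite wstate_snoc, wire_pos_snoc, IH. apply tau_involutive.
Qed.

Lemma wire_pos_inj w a b : wire_pos w a = wire_pos w b -> a = b.
Proof. intros H. rewrite <- (wstate_wire_pos w a), <- (wstate_wire_pos w b), H. reflexivity. Qed.

Lemma wstate_mod_inj w p q : (wstate n w p) mod n = (wstate n w q) mod n -> p mod n = q mod n.
Proof.
  intros H. apply (mod_eq_ex n) in H as [c Hc]; [|lia].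
  assert (E : p = q + c * n).
  { rewrite <- (wire_pos_wstate w p), Hc, wire_pos_periodic, wire_pos_wstate. reflexivity. }
  rewrite E. apply Z.mod_add; lia.
Qed.

Lemma first_inversion u v a b :
  wire_pos u a < wire_pos u b -> wire_pos (u ++ v) a > wire_pos (u ++ v) b ->
  exists v1 l v2, v = v1 ++ l :: v2 /\ (wire_pos (u ++ v1) a) mod n = l mod n /\
    wire_pos (u ++ v1) b = wire_pos (u ++ v1) a + 1.
Proof.
  intros H0. induction v as [|l v IH] using rev_ind; intros H.
  - rewrite app_nil_r in H. lia.
  - rewrite app_assoc, !wire_pos_snoc in H.
    destruct (Z.lt_total (wire_pos (u ++ v) a) (wire_pos (u ++ v) b)) as [L|[L|L]].
    + destruct (tau_inversion l _ _ L H). exists v, l, []. auto.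
    + apply wire_pos_inj in L. subst. lia.
    + destruct (IH ltac:(lia)) as [v1 [l' [v2 [E [E1 E2]]]]]. exists v1, l', (v2 ++ [l]).
      subst v. rewrite <- app_assoc. auto.
Qed.

Lemma crossings_aux_iff sigma w c : In c (crossings_aux n sigma w) <->
  exists u l v, w = u ++ l :: v /\ c = (sigma (wstate n u (l + 1)), sigma (wstate n u l)).
Proof.
  revert sigma. induction w as [|l w IH]; intros sigma; simpl.
  - split; [tauto|]. intros [[|] [? [? [E _]]]]; discriminate.
  - split.
    + intros [E|Hin].
      * exists [], l, w. auto.
      * apply IH in Hin as [u [l' [v [E1 E2]]]].
        exists (l :: u), l', v. subst. rewrite !wstate_cons. auto.
    + intros [[|l0 u] [l' [v [E1 E2]]]]; injection E1 as -> ->.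
      * left. subst. reflexivity.
      * right. apply IH. exists u, l', v. subst. rewrite !wstate_cons. auto.
Qed.

(* Appending a crossing of the wires [a] and [b] exchanges the residue classes of
   their labels. *)
Definition swap_classes (a b z : Z) : Z :=
  if Z.eqb (z mod n) (a mod n) then z + b - a
  else if Z.eqb (z mod n) (b mod n) then z + a - b else z.

Lemma swap_classes_involutive a b z : a mod n <> b mod n ->
  swap_classes a b (swap_classes a b z) = z /\ swap_classes b a (swap_classes a b z) = z.
Proof.
  intros Hab. unfold swap_classes at 2 4.
  destruct (Z.eqb_spec (z mod n) (a mod n)) as [E1|E1].
  - unfold swap_classes. rewrite (mod_shift z a b E1), Z.eqb_refl.
    destruct (Z.eqb_spec (b mod n) (a mod n)); [congruence|]. split; ring.
  - destruct (Z.eqb_spec (z mod n) (b mod n)) as [E2|E2].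
    + unfold swap_classes. rewrite (mod_shift z b a E2), Z.eqb_refl.
      destruct (Z.eqb_spec (a mod n) (b mod n)); [congruence|]. split; ring.
    + unfold swap_classes. destruct (Z.eqb_spec (z mod n) (a mod n)); [congruence|].
      destruct (Z.eqb_spec (z mod n) (b mod n)); [congruence|]. auto.
Qed.

Lemma wstate_snoc_swap u l p0 a b : p0 mod n = l mod n ->
  wstate n u p0 = a -> wstate n u (p0 + 1) = b ->
  forall p, wstate n (u ++ [l]) p = swap_classes a b (wstate n u p).
Proof.
  intros H0 Ha Hb p. rewrite wstate_snoc. unfold swap_classes.
  destruct (tau_cases l p) as [[H1 ->]|[[H1 [H2 ->]]|[H1 [H2 ->]]]].
  - rewrite <- H0 in H1. apply (mod_eq_ex n) in H1 as [c ->]; [|lia].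
    rewrite wstate_periodic, Ha, Z.mod_add, Z.eqb_refl by lia.
    replace (p0 + c * n + 1) with ((p0 + 1) + c * n) by ring.
    rewrite wstate_periodic, Hb. ring.
  - rewrite <- H0 in H2. apply (mod_eq_ex n) in H2 as [c Hc]; [|lia].
    replace p with ((p0 + 1) + c * n) by lia. rewrite wstate_periodic, Hb.
    replace (p0 + 1 + c * n - 1) with (p0 + c * n) by ring.
    rewrite wstate_periodic, Ha, Z.mod_add by lia.
    destruct (Z.eqb_spec (b mod n) (a mod n)) as [E|_].
    + exfalso. rewrite <- Ha, <- Hb in E. apply wstate_mod_inj in E.
      apply (mod_succ_neq p0). congruence.
    + rewrite Z.eqb_refl. ring.
  - destruct (Z.eqb_spec (wstate n u p mod n) (a mod n)) as [E|_].
    + exfalso. rewrite <- Ha in E. apply wstate_mod_inj in E. congruence.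
    + destruct (Z.eqb_spec (wstate n u p mod n) (b mod n)) as [E|_]; [|reflexivity].
      exfalso. rewrite <- Hb in E. apply wstate_mod_inj, mod_pred_eq in E. congruence.
Qed.

Lemma double_crossing_cancel u l1 m l2 v p1 p2 a b : a mod n <> b mod n ->
  p1 mod n = l1 mod n -> wstate n u p1 = a -> wstate n u (p1 + 1) = b ->
  p2 mod n = l2 mod n ->
  ((wstate n (u ++ l1 :: m) p2 = a /\ wstate n (u ++ l1 :: m) (p2 + 1) = b) \/
   (wstate n (u ++ l1 :: m) p2 = b /\ wstate n (u ++ l1 :: m) (p2 + 1) = a)) ->
  forall p, wstate n (u ++ l1 :: m ++ l2 :: v) p = wstate n (u ++ m ++ v) p.
Proof.
  intros Hab H1 Ha Hb H2 Hc p.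
  replace (u ++ l1 :: m ++ l2 :: v) with (((u ++ l1 :: m) ++ [l2]) ++ v)
    by (rewrite <- !app_assoc; reflexivity).
  rewrite (wstate_app _ v), (wstate_app u (m ++ v)), (wstate_app m v).
  assert (HW : forall r, wstate n (u ++ l1 :: m) r = swap_classes a b (wstate n u (wstate n m r))).
  { intros r. replace (u ++ l1 :: m) with ((u ++ [l1]) ++ m) by (rewrite <- app_assoc; reflexivity).
    rewrite wstate_app. apply (wstate_snoc_swap u l1 p1); assumption. }
  destruct Hc as [[Ea Eb]|[Ea Eb]].
  - rewrite (wstate_snoc_swap _ l2 p2 a b H2 Ea Eb), HW. apply swap_classes_involutive; assumption.
  - rewrite (wstate_snoc_swap _ l2 p2 b a H2 Ea Eb), HW. apply swap_classes_involutive; assumption.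
Qed.

Lemma reduced_no_cancel v1 l1 v2 l2 v3 : valid_word n (v1 ++ l1 :: v2 ++ l2 :: v3) ->
  reduced_word n (v1 ++ l1 :: v2 ++ l2 :: v3) ->
  ~ (forall p, wstate n (v1 ++ l1 :: v2 ++ l2 :: v3) p = wstate n (v1 ++ v2 ++ v3) p).
Proof.
  intros Hv Hr E.
  assert (Hv' : valid_word n (v1 ++ v2 ++ v3)).
  { unfold valid_word in *.
    rewrite !Forall_app, !Forall_cons_iff, !Forall_app, !Forall_cons_iff in *. tauto. }
  assert (Hl : (length (v1 ++ l1 :: v2 ++ l2 :: v3) <= length (v1 ++ v2 ++ v3))%nat).
  { apply Hr; [exact Hv'|]. intros p. symmetry. apply E. }
  repeat (rewrite ?length_app in Hl; simpl in Hl). lia.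
Qed.

Lemma wstate_adjacent_mod_neq u p : (wstate n u p) mod n <> (wstate n u (p + 1)) mod n.
Proof. intros E. apply wstate_mod_inj in E. exact (mod_succ_neq p E). Qed.

(* Otherwise the two wires of the crossing already crossed earlier in [u0]. *)
Lemma reduced_crossing_label_lt w u0 l v0 : valid_word n w -> reduced_word n w ->
  w = u0 ++ l :: v0 -> wstate n u0 l < wstate n u0 (l + 1).
Proof.
  intros Hv Hr Ew.
  set (x := wstate n u0 l). set (y := wstate n u0 (l + 1)).
  pose proof (wstate_adjacent_mod_neq u0 l) as Hxy. fold x y in Hxy.
  destruct (Z.lt_total x y) as [L|[L|L]]; [exact L|rewrite L in Hxy; tauto|exfalso].
  assert (Px : wire_pos u0 x = l) by apply wire_pos_wstate.
  assert (Py : wire_pos u0 y = l + 1) by apply wire_pos_wstate.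
  destruct (first_inversion [] u0 y x ltac:(simpl; lia) ltac:(simpl; lia))
    as [v1 [l' [v2 [E [E1 E2]]]]].
  simpl in E1, E2.
  assert (Ew' : w = v1 ++ l' :: v2 ++ l :: v0) by (rewrite Ew, E, <- app_assoc; reflexivity).
  rewrite Ew' in Hv, Hr. apply (reduced_no_cancel v1 l' v2 l v0 Hv Hr).
  apply (double_crossing_cancel v1 l' v2 l v0 (wire_pos v1 y) l y x); auto.
  - apply wstate_wire_pos.
  - rewrite <- E2. apply wstate_wire_pos.
  - right. rewrite <- E. auto.
Qed.

(* Otherwise the two wires of the crossing cross again later in [v0]. *)
Lemma reduced_crossing_pos_gt w u0 l v0 : valid_word n w -> reduced_word n w ->
  w = u0 ++ l :: v0 -> wire_pos w (wstate n u0 l) > wire_pos w (wstate n u0 (l + 1)).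
Proof.
  intros Hv Hr Ew.
  set (x := wstate n u0 l). set (y := wstate n u0 (l + 1)).
  pose proof (wstate_adjacent_mod_neq u0 l) as Hxy. fold x y in Hxy.
  destruct (Z.lt_total (wire_pos w x) (wire_pos w y)) as [L|[L|L]]; [| |lia]; exfalso.
  - assert (P1 : wire_pos (u0 ++ [l]) y < wire_pos (u0 ++ [l]) x).
    { unfold x, y. rewrite !wire_pos_snoc, !wire_pos_wstate.
      destruct (tau_swap_adjacent l l eq_refl) as [-> ->]. lia. }
    destruct (first_inversion (u0 ++ [l]) v0 y x P1
                ltac:(rewrite <- app_assoc; simpl; rewrite <- Ew; lia))
      as [v1 [l' [v2 [E [E1 E2]]]]].
    assert (Ew' : w = u0 ++ l :: v1 ++ l' :: v2) by (rewrite Ew, E; reflexivity).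
    rewrite Ew' in Hv, Hr. apply (reduced_no_cancel u0 l v1 l' v2 Hv Hr).
    apply (double_crossing_cancel u0 l v1 l' v2 l (wire_pos ((u0 ++ [l]) ++ v1) y) x y); auto.
    right. replace (u0 ++ l :: v1) with ((u0 ++ [l]) ++ v1) by (rewrite <- app_assoc; reflexivity).
    rewrite <- E2. split; apply wstate_wire_pos.
  - apply wire_pos_inj in L. rewrite L in Hxy. tauto.
Qed.

(** * Displacements, chamber labels and the trajectory *)

Definition disp (w : list Z) (x : Z) : Z := wire_pos w x - x.

Definition disp_congr (w : list Z) : Prop := forall x y, exists e, disp w x - disp w y = e * n.

Lemma disp_periodic w x c : disp w (x + c * n) = disp w x.
Proof. unfold disp. rewrite wire_pos_periodic. ring. Qed.

Lemma residue_rep p : exists j c, 1 <= j <= n /\ p = j + c * n.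
Proof.
  exists ((p - 1) mod n + 1), ((p - 1) / n).
  pose proof (Z.div_mod (p - 1) n ltac:(lia)). pose proof (Z.mod_pos_bound (p - 1) n ltac:(lia)).
  lia.
Qed.

(* A glide of offset [k] moves every wire by [-k] modulo [n]. *)
Lemma glide_disp_congr w : is_glide n w -> disp_congr w.
Proof.
  intros [k [Hk Hg]].
  assert (G : forall p, (wstate n w p) mod n = (p + k) mod n).
  { intros p. destruct (residue_rep p) as [j [c [Hj ->]]].
    rewrite wstate_periodic, Z.mod_add by lia.
    replace (j + c * n + k) with ((j + k) + c * n) by ring. rewrite Z.mod_add by lia. auto. }
  assert (G2 : forall x, exists c, disp w x = - k + c * n).
  { intros x. pose proof (G (wire_pos w x)) as E. rewrite wstate_wire_pos in E.
    apply (mod_eq_ex n) in E as [c Hc]; [|lia]. exists (- c). unfold disp. lia. }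
  intros x y. destruct (G2 x) as [c1 H1], (G2 y) as [c2 H2]. exists (c1 - c2). lia.
Qed.

Lemma zceil_window i b c e : 1 <= i <= n -> b = i + c * n -> b <= 1 + e * n < b + n ->
  zceil b n = e + (if i =? 1 then 1 else 0).
Proof.
  intros Hi Hb He. unfold zceil. destruct (Z.eqb_spec i 1) as [->|E].
  - assert (c = e) by nia. subst.
    rewrite <- (Z.div_unique (- (1 + e * n)) n (- e - 1) (n - 1)); [ring|lia|ring].
  - assert (c = e - 1) by nia. subst.
    rewrite <- (Z.div_unique (- (i + (e - 1) * n)) n (- e) (n - i)); [ring|lia|ring].
Qed.

(* The wires of class [i] are [i + c n] with final positions [i + disp v i + c n], so the
   topmost one below wire [1] is determined by [disp v 1 - disp v i]. *)
Lemma chamber_label_value v s : is_chamber_label n (wstate n v) (wire_pos v 1) s ->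
  forall i e, 1 <= i <= n -> disp v 1 - disp v i = e * n ->
  s i = e + (if i =? 1 then 1 else 0).
Proof.
  intros Hs i e Hi He.
  destruct (Hs i Hi) as [b [[p [Hp Hsp]] [Hbm [Hmax ->]]]].
  apply (mod_eq_ex n) in Hbm as [c Hc]; [|lia].
  assert (P1 : wire_pos v b = p) by (rewrite <- Hsp; apply wire_pos_wstate).
  assert (P2 : wire_pos v (b + 1 * n) > wire_pos v 1).
  { destruct (Z.le_gt_cases (wire_pos v (b + 1 * n)) (wire_pos v 1)) as [L|L]; [|lia].
    exfalso. specialize (Hmax _ L). rewrite wstate_wire_pos in Hmax.
    enough (b + 1 * n <= b) by lia. apply Hmax. rewrite Hc.
    replace (i + c * n + 1 * n) with (i + (c + 1) * n) by ring. rewrite !Z.mod_add; lia. }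
  rewrite wire_pos_periodic in P2.
  assert (Db : disp v b = disp v i) by (rewrite Hc; apply disp_periodic).
  unfold disp in Db, He.
  apply (zceil_window i b c e Hi Hc). lia.
Qed.

Lemma chamber_label_exists v : disp_congr v ->
  exists s, is_chamber_label n (wstate n v) (wire_pos v 1) s.
Proof.
  intros HD.
  set (top := fun i => i + ((disp v 1 - disp v i) / n - (if i =? 1 then 0 else 1)) * n).
  exists (fun i => zceil (top i) n). intros i Hi.
  destruct (HD 1 i) as [e He].
  assert (Ee : (disp v 1 - disp v i) / n = e) by (rewrite He; apply Z.div_mul; lia).
  assert (Ht : top i = i + (e - (if i =? 1 then 0 else 1)) * n)
    by (unfold top; rewrite Ee; reflexivity).
  assert (Hw : top i <= 1 + e * n < top i + n) by (rewrite Ht; destruct (Z.eqb_spec i 1); lia).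
  assert (Dt : disp v (top i) = disp v i) by (rewrite Ht; apply disp_periodic).
  unfold disp in Dt, He.
  exists (top i). split; [|split; [|split]].
  - exists (wire_pos v (top i)). split; [lia|]. apply wstate_wire_pos.
  - rewrite Ht. apply Z.mod_add; lia.
  - intros p Hp Hm.
    assert (Hm' : wstate n v p mod n = top i mod n) by (rewrite Hm, Ht, Z.mod_add; lia).
    apply (mod_eq_ex n) in Hm' as [c Hc]; [|lia].
    assert (Hpc : wire_pos v (wstate n v p) = wire_pos v (top i) + c * n)
      by (rewrite Hc; apply wire_pos_periodic).
    rewrite wire_pos_wstate in Hpc. assert (c <= 0) by nia. rewrite Hc. nia.
  - reflexivity.
Qed.

Lemma trajectory_value w t : disp_congr w ->
  is_trajectory n w t -> forall i, 1 <= i <= n -> disp w 1 - disp w i = t i * n.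
Proof.
  intros HD [sR [sL [HR [HL Ht]]]] i Hi.
  destruct (HD 1 i) as [e He].
  rewrite Ht, (chamber_label_value w sR HR i e Hi He),
    (chamber_label_value [] sL HL i 0 Hi ltac:(unfold disp; simpl; ring)), He by exact Hi.
  ring.
Qed.

Lemma trajectory_exists w : disp_congr w -> exists t, is_trajectory n w t.
Proof.
  intros HD.
  destruct (chamber_label_exists w HD) as [sR HR].
  destruct (chamber_label_exists [] ltac:(intros x y; exists 0; unfold disp; simpl; ring))
    as [sL HL].
  exists (fun i => sR i - sL i), sR, sL. auto.
Qed.

Lemma wire_num_periodic b : exists c, b = wire_num n b + c * n.
Proof.
  exists ((b - 1) / n). unfold wire_num. pose proof (Z.div_mod (b - 1) n ltac:(lia)). lia.
Qed.

Lemma wire_num_range b : 1 <= wire_num n b <= n.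
Proof. unfold wire_num. pose proof (Z.mod_pos_bound (b - 1) n ltac:(lia)). lia. Qed.

Lemma wire_num_small j : 1 <= j <= n -> wire_num n j = j.
Proof. intros H. unfold wire_num. rewrite Z.mod_small by lia. ring. Qed.

Lemma wire_num_mod_congr b b' : b mod n = b' mod n -> wire_num n b = wire_num n b'.
Proof.
  intros H. apply (mod_eq_ex n) in H as [c ->]; [|lia]. unfold wire_num.
  replace (b' + c * n - 1) with ((b' - 1) + c * n) by ring. rewrite Z.mod_add; lia.
Qed.

Lemma disp_wire_num w b : disp w (wire_num n b) = disp w b.
Proof.
  destruct (wire_num_periodic b) as [c Hc]. rewrite Hc at 2. symmetry. apply disp_periodic.
Qed.

Lemma crossing_of_inversion w v u : v < u -> wire_pos w v > wire_pos w u ->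
  exists c, In c (crossings n w) /\ (fst c) mod n = u mod n /\ (snd c) mod n = v mod n.
Proof.
  intros Hvu Hp.
  destruct (first_inversion [] w v u ltac:(simpl; lia) ltac:(simpl; lia))
    as [v1 [l [v2 [E [E1 E2]]]]].
  simpl in E1, E2.
  exists (wstate n v1 (l + 1), wstate n v1 l). split.
  - apply crossings_aux_iff. exists v1, l, v2. auto.
  - apply (mod_eq_ex n) in E1 as [c Hc]; [|lia]. simpl.
    pose proof (wstate_wire_pos v1 v) as A1. pose proof (wstate_wire_pos v1 u) as A2.
    rewrite Hc, wstate_periodic in A1.
    rewrite E2, Hc, Z.add_shuffle0, wstate_periodic in A2.
    rewrite <- A1, <- A2, !Z.mod_add by lia. auto.
Qed.

Lemma inversion_of_disp_gap w i j : 1 <= i <= n -> 1 <= j <= n -> disp w j + n <= disp w i ->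
  exists u, i < u /\ u mod n = j mod n /\ wire_pos w i > wire_pos w u.
Proof.
  unfold disp. intros Hi Hj Hgap. destruct (Z.lt_total i j) as [Hij|[->|Hij]].
  - exists j. repeat split; lia.
  - lia.
  - exists (j + 1 * n). rewrite wire_pos_periodic, Z.mod_add by lia. repeat split; lia.
Qed.

Lemma reduced_crossing_disp_gt w c : valid_word n w -> reduced_word n w ->
  In c (crossings n w) -> disp w (snd c) > disp w (fst c).
Proof.
  intros Hv Hr Hc. apply crossings_aux_iff in Hc as [u0 [l [v0 [Ew ->]]]]. simpl.
  pose proof (reduced_crossing_label_lt w u0 l v0 Hv Hr Ew).
  pose proof (reduced_crossing_pos_gt w u0 l v0 Hv Hr Ew). unfold disp. lia.
Qed.

Lemma trajectory_ge_iff_disp_le w t a b : disp_congr w ->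
  is_trajectory n w t -> 1 <= a <= n -> 1 <= b <= n -> (t a >= t b <-> disp w a <= disp w b).
Proof.
  intros HD Ht Ha Hb.
  pose proof (trajectory_value w t HD Ht a Ha). pose proof (trajectory_value w t HD Ht b Hb).
  split; intros; nia.
Qed.

End Cylinder.

Lemma interval_injection_surjective n (f : Z -> Z) :
  (forall i, 1 <= i <= n -> 1 <= f i <= n) ->
  (forall i j, 1 <= i <= n -> 1 <= j <= n -> f i = f j -> i = j) ->
  forall j, 1 <= j <= n -> exists i, 1 <= i <= n /\ f i = j.
Proof.
  intros Hr Hi j Hj.
  set (L := map Z.of_nat (seq 1 (Z.to_nat n))).
  assert (HL : forall z, In z L <-> 1 <= z <= n).
  { intros z. unfold L. rewrite in_map_iff. split.
    - intros [k [<- Hk]]. apply in_seq in Hk. lia.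
    - intros Hz. exists (Z.to_nat z). split; [lia|]. apply in_seq. lia. }
  assert (ND : NoDup L).
  { apply NoDup_map_NoDup_ForallPairs; [intros a b _ _; lia|]. apply seq_NoDup. }
  assert (NDf : NoDup (map f L)).
  { apply NoDup_map_NoDup_ForallPairs; [|exact ND]. intros a b Ha Hb. apply Hi; apply HL; auto. }
  assert (Inc : incl (map f L) L).
  { intros z Hz. apply in_map_iff in Hz as [a [<- Ha]]. apply HL, Hr, HL, Ha. }
  assert (Hfj : In j (map f L)).
  { apply (NoDup_length_incl (l' := L) NDf); [rewrite length_map; lia|exact Inc|apply HL, Hj]. }
  apply in_map_iff in Hfj as [i [Ei Hi']]. exists i. split; [apply HL|]; assumption.
Qed.

Lemma chain_le m (f : Z -> Z) : (forall r, 1 <= r < m -> f r <= f (r + 1)) ->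
  forall a b, 1 <= a <= b -> b <= m -> f a <= f b.
Proof.
  intros H a b Hab Hb.
  remember (Z.to_nat (b - a)) as k eqn:Ek. revert b Hab Hb Ek.
  induction k as [|k IH]; intros b Hab Hb Ek.
  - replace b with a by lia. lia.
  - specialize (IH (b - 1) ltac:(lia) ltac:(lia) ltac:(lia)).
    specialize (H (b - 1) ltac:(lia)). replace (b - 1 + 1) with b in H by ring. lia.
Qed.

Lemma chain_gt m (f : Z -> R) : (forall r, 1 <= r < m -> Rgt (f r) (f (r + 1))) ->
  forall a b, 1 <= a < b -> b <= m -> Rgt (f a) (f b).
Proof.
  intros H a b Hab Hb.
  remember (Z.to_nat (b - a - 1)) as k eqn:Ek. revert b Hab Hb Ek.
  induction k as [|k IH]; intros b Hab Hb Ek.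
  - replace b with (a + 1) by lia. apply H. lia.
  - specialize (IH (b - 1) ltac:(lia) ltac:(lia) ltac:(lia)).
    specialize (H (b - 1) ltac:(lia)). replace (b - 1 + 1) with b in H by ring. lra.
Qed.

(** * Positive crossing parameters versus sorted displacements *)

Section PositiveParameters.

Variables (n : Z) (alpha : Z -> R) (pi : Z -> Z) (w : list Z).
Hypothesis n_ge2 : 2 <= n.
Hypothesis pi_range : forall i, 1 <= i <= n -> 1 <= pi i <= n.
Hypothesis pi_inj : forall i j, 1 <= i <= n -> 1 <= j <= n -> pi i = pi j -> i = j.
Hypothesis alpha_pi_decr : forall i, 1 <= i < n -> Rgt (alpha (pi i)) (alpha (pi (i + 1))).

Lemma disp_sorted_of_params_positive : disp_congr n w -> all_params_positive n alpha w ->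
  forall r, 1 <= r < n -> disp n w (pi r) <= disp n w (pi (r + 1)).
Proof.
  intros HD Hpos r Hr.
  pose proof (pi_range r ltac:(lia)). pose proof (pi_range (r + 1) ltac:(lia)).
  destruct (Z.le_gt_cases (disp n w (pi r)) (disp n w (pi (r + 1)))) as [|Hgt];
    [assumption|exfalso].
  destruct (HD (pi r) (pi (r + 1))) as [e He].
  assert (Hgap : disp n w (pi (r + 1)) + n <= disp n w (pi r)) by (assert (e >= 1) by nia; nia).
  destruct (inversion_of_disp_gap n n_ge2 w (pi r) (pi (r + 1)) ltac:(lia) ltac:(lia) Hgap)
    as [u [Hu [Hum Hinv]]].
  destruct (crossing_of_inversion n n_ge2 w (pi r) u Hu Hinv) as [c [Hc [Hup Hlow]]].
  unfold all_params_positive in Hpos. rewrite Forall_forall in Hpos.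
  specialize (Hpos c Hc). specialize (alpha_pi_decr r Hr).
  rewrite (wire_num_mod_congr n n_ge2 (fst c) (pi (r + 1))),
    (wire_num_mod_congr n n_ge2 (snd c) (pi r)), !wire_num_small in Hpos by (lia || congruence).
  lra.
Qed.

Lemma params_positive_of_disp_sorted : valid_word n w -> reduced_word n w ->
  (forall r, 1 <= r < n -> disp n w (pi r) <= disp n w (pi (r + 1))) ->
  all_params_positive n alpha w.
Proof.
  intros Hv Hr Hsorted. unfold all_params_positive. rewrite Forall_forall. intros c Hc.
  pose proof (reduced_crossing_disp_gt n n_ge2 w c Hv Hr Hc) as Hgt.
  destruct (interval_injection_surjective n pi pi_range pi_inj (wire_num n (snd c)))
    as [a [Ha Ea]]; [apply wire_num_range; lia|].
  destruct (interval_injection_surjective n pi pi_range pi_inj (wire_num n (fst c)))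
    as [b [Hb Eb]]; [apply wire_num_range; lia|].
  rewrite <- Ea, <- Eb.
  destruct (Z.lt_ge_cases b a) as [Hba|Hab].
  - pose proof (chain_gt n (fun r => alpha (pi r)) alpha_pi_decr b a ltac:(lia) ltac:(lia)). lra.
  - exfalso. pose proof (chain_le n (fun r => disp n w (pi r)) Hsorted a b ltac:(lia) ltac:(lia)).
    simpl in H. rewrite Ea, Eb, !(disp_wire_num n n_ge2) in H. lia.
Qed.

End PositiveParameters.

Theorem proposition7p4 (n : Z) (alpha : Z -> R) (pi : Z -> Z) (w : list Z) :
  3 <= n ->
  (forall i, 1 <= i <= n -> 1 <= pi i <= n) ->
  (forall i j, 1 <= i <= n -> 1 <= j <= n -> pi i = pi j -> i = j) ->
  (forall i, 1 <= i < n -> Rgt (alpha (pi i)) (alpha (pi (i + 1)))) ->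
  valid_word n w -> reduced_word n w -> is_glide n w ->
  (all_params_positive n alpha w <->
   forall t : Z -> Z, is_trajectory n w t ->
     forall i, 1 <= i < n -> t (pi i) >= t (pi (i + 1))).
Proof.
  intros Hn3 Hpi_range Hpi_inj Halpha Hv Hr Hglide.
  assert (Hn : 2 <= n) by lia.
  pose proof (glide_disp_congr n Hn w Hglide) as HD.
  assert (Hcmp : forall t, is_trajectory n w t -> forall r, 1 <= r < n ->
            t (pi r) >= t (pi (r + 1)) <-> disp n w (pi r) <= disp n w (pi (r + 1))).
  { intros t Ht r Hr'. apply (trajectory_ge_iff_disp_le n Hn w t); auto; apply Hpi_range; lia. }
  split.
  - intros Hpos t Ht r Hr'. apply (Hcmp t Ht r Hr').
    exact (disp_sorted_of_params_positive n alpha pi w Hn Hpi_range Halpha HD Hpos r Hr').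
  - intros Hsorted. destruct (trajectory_exists n Hn w HD) as [t Ht].
    apply (params_positive_of_disp_sorted n alpha pi w Hn Hpi_range Hpi_inj Halpha Hv Hr).
    intros r Hr'. apply (Hcmp t Ht r Hr'), Hsorted; assumption.
Qed.
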